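(* There is an absolute constant $C$ such that for all $x,u\in\mathbb R$, \[\sup_{0<t\le1}K_t(x,u)\,\bigl(1-\eta((1+|x|)|x-u|)\bigr)\le C\,e^{R(x)}(1+|x|).\]
   Context: $R(x)=x^2/2$. $K_t(x,u)=\frac{e^{R(x)}}{\sqrt{1-e^{-2t}}}\exp\bigl(-\frac12\frac{(e^{-t}u-x)^2}{1-e^{-2t}}\bigr)$. $\eta\ge0$ is a fixed smooth function on $[0,\infty)$ with $\eta=1$ on $[0,1/2]$ and $\eta=0$ on $[1,\infty)$ (with $0\le\eta\le1$). *)

From Stdlib Require Import Reals.
From Coquelicot Require Import Coquelicot.
Open Scope R_scope.

Definition Rpot (x : R) : R := x ^ 2 / 2.

Definition K (t x u : R) : R :=
  exp (Rpot x) / sqrt (1 - exp (-2 * t)) *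
  exp (- / 2 * ((exp (- t) * u - x) ^ 2 / (1 - exp (- 2 * t)))).

Definition smooth (f : R -> R) : Prop :=
  forall (n : nat) (y : R), ex_derive (Derive_n f n) y.

Definition cutoff (eta : R -> R) : Prop :=
  smooth eta /\
  (forall y, 0 <= y <= / 2 -> eta y = 1) /\
  (forall y, 1 <= y -> eta y = 0) /\
  (forall y, 0 <= y -> 0 <= eta y <= 1).

(* Writing E = e^{-t}, r = sqrt (1 - E^2) and a = E u - x, the
   kernel factors as K_t(x,u) = e^{R(x)} * g(r,a), where g(r,a) =
   r^{-1} exp (-a^2 / (2 r^2)) is an unnormalised Gaussian profile.  Two
   elementary bounds control g: g(r,a) <= 1/c when the width is large
   (r >= c), and g(r,a) <= 1/c when the displacement is large (|a| >= c),
   the latter because z e^{-z^2/2} <= 1.  The factor 1 - eta(...) vanishes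
   unless (1+|x|) |x-u| > 1/2.  On that region the identity
   E (x - u) = -(a + (1-E) x), together with E >= 1/3 for t <= 1, gives
   (1+|x|) (|a| + r^2 |x|) > 1/6, so either |a| or r exceeds
   1 / (12 (1+|x|)); hence g(r,a) <= 12 (1+|x|) and C = 12 works. *)

From Coquelicot Require Import Coquelicot.
From Stdlib Require Import Reals Lra Psatz.
Open Scope R_scope.

Lemma exp_mono (p q : R) : p <= q -> exp p <= exp q.
Proof.
  intros Hpq; destruct (Rle_lt_or_eq_dec p q Hpq) as [Hlt | ->];
    [left; apply exp_increasing | right]; easy.
Qed.

Definition gauss (r a : R) : R := / r * exp (- / 2 * (a ^ 2 / r ^ 2)).

Lemma gauss_nonneg (r a : R) : 0 < r -> 0 <= gauss r a.
Proof.
  intros Hr; unfold gauss.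
  apply Rmult_le_pos; [apply Rlt_le, Rinv_0_lt_compat; lra | apply Rlt_le, exp_pos].
Qed.

Lemma gauss_le_inv_width (r a : R) : 0 < r -> gauss r a <= / r.
Proof.
  intros Hr; unfold gauss.
  assert (Hdecay : exp (- / 2 * (a ^ 2 / r ^ 2)) <= 1).
  { rewrite <- exp_0; apply exp_mono.
    assert (0 <= a ^ 2 / r ^ 2) by (apply Rcomplements.Rdiv_le_0_compat; nra).
    lra. }
  assert (0 < / r) by (apply Rinv_0_lt_compat; lra).
  nra.
Qed.

Lemma gauss_bound_wide (r a c : R) : 0 < c <= r -> gauss r a <= / c.
Proof.
  intros Hc.
  apply (Rle_trans _ (/ r)); [apply gauss_le_inv_width; lra|].
  apply Rinv_le_contravar; lra.
Qed.

(* The scalar estimate z e^{-z^2/2} <= 1, from z <= 1 + z^2/2 <= e^{z^2/2}. *)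
Lemma mul_exp_neg_sq_le_1 (z : R) : 0 <= z -> z * exp (- / 2 * z ^ 2) <= 1.
Proof.
  intros Hz.
  assert (Hgrow : z <= exp (/ 2 * z ^ 2)).
  { pose proof (exp_ineq1_le (/ 2 * z ^ 2)); nra. }
  replace (- / 2 * z ^ 2) with (- (/ 2 * z ^ 2)) by ring.
  rewrite exp_Ropp.
  assert (0 < exp (/ 2 * z ^ 2)) by apply exp_pos.
  apply (Rmult_le_reg_r (exp (/ 2 * z ^ 2))); [lra|].
  rewrite Rmult_assoc, Rinv_l by lra; lra.
Qed.

Lemma gauss_bound_far (r a c : R) : 0 < r -> 0 < c <= Rabs a -> gauss r a <= / c.
Proof.
  intros Hr Hc.
  set (z := Rabs a / r).
  assert (Hz : 0 <= z) by (unfold z; apply Rcomplements.Rdiv_le_0_compat; lra).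
  assert (Hg : gauss r a = / Rabs a * (z * exp (- / 2 * z ^ 2))).
  { unfold gauss, z.
    replace ((Rabs a / r) ^ 2) with (a ^ 2 / r ^ 2)
      by (rewrite <- (pow2_abs a); field; lra).
    field; lra. }
  rewrite Hg.
  apply (Rle_trans _ (/ Rabs a)).
  - assert (0 < / Rabs a) by (apply Rinv_0_lt_compat; lra).
    pose proof (mul_exp_neg_sq_le_1 z Hz); nra.
  - apply Rinv_le_contravar; lra.
Qed.

(* Off-diagonal estimate: if (1+X)(|a| + r^2 X) > 1/6 with r <= 1, then
   |a| or r is at least 1/(12(1+X)), so g(r,a) <= 12 (1+X). *)
Lemma gauss_off_diagonal (r a X : R) :
  0 < r <= 1 -> 0 <= X -> (1 + X) * (Rabs a + r ^ 2 * X) > / 6 ->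
  gauss r a <= 12 * (1 + X).
Proof.
  intros Hr HX Hsep.
  set (c := / (12 * (1 + X))).
  assert (Hc : 0 < c) by (unfold c; apply Rinv_0_lt_compat; lra).
  assert (Hinv : / c = 12 * (1 + X)) by (unfold c; rewrite Rinv_inv; reflexivity).
  rewrite <- Hinv.
  assert (Hc12 : c * (12 * (1 + X)) = 1) by (unfold c; field; lra).
  destruct (Rle_or_lt c (Rabs a)) as [Hfar | Hnear].
  - apply gauss_bound_far; lra.
  - apply gauss_bound_wide; split; [lra|].
    (* |a| < c forces r^2 X (1+X) > 1/12, hence r (1+X) > 1/12. *)
    assert (Hwidth : r ^ 2 * X * (1 + X) > / 12) by nra.
    destruct (Rle_or_lt c r) as [Hle | Hlt]; [lra|].
    assert (r * (1 + X) < / 12) by nra.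
    assert (r ^ 2 * X * (1 + X) <= (r * (1 + X)) ^ 2) by nra.
    nra.
Qed.

Lemma shift_bound (E x u : R) :
  0 <= E <= 1 -> E * Rabs (x - u) <= Rabs (E * u - x) + (1 - E ^ 2) * Rabs x.
Proof.
  intros HE.
  replace (E * Rabs (x - u)) with (Rabs (- ((E * u - x) + (1 - E) * x))).
  - rewrite Rabs_Ropp.
    eapply Rle_trans; [apply Rabs_triang|].
    rewrite Rabs_mult, (Rabs_pos_eq (1 - E)) by lra.
    pose proof (Rabs_pos x).
    assert (1 - E <= 1 - E ^ 2) by nra.
    nra.
  - replace (- ((E * u - x) + (1 - E) * x)) with (E * (x - u)) by ring.
    rewrite Rabs_mult, (Rabs_pos_eq E) by lra; reflexivity.
Qed.

Lemma off_support_separation (E x u : R) :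
  / 3 <= E <= 1 -> (1 + Rabs x) * Rabs (x - u) > / 2 ->
  (1 + Rabs x) * (Rabs (E * u - x) + (1 - E ^ 2) * Rabs x) > / 6.
Proof.
  intros HE Hoff.
  pose proof (Rabs_pos x); pose proof (Rabs_pos (x - u)).
  assert (Hscaled : (1 + Rabs x) * (E * Rabs (x - u))
                    <= (1 + Rabs x) * (Rabs (E * u - x) + (1 - E ^ 2) * Rabs x))
    by (apply Rmult_le_compat_l; [lra | apply shift_bound; lra]).
  assert (/ 3 * ((1 + Rabs x) * Rabs (x - u)) <= (1 + Rabs x) * (E * Rabs (x - u))).
  { replace ((1 + Rabs x) * (E * Rabs (x - u))) with (E * ((1 + Rabs x) * Rabs (x - u)))
      by ring.
    apply Rmult_le_compat_r; nra. }
  lra.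
Qed.

Lemma exp_neg_bounds (t : R) : 0 < t <= 1 -> / 3 <= exp (- t) < 1.
Proof.
  intros Ht; split.
  - assert (Hmono : exp (- (1)) <= exp (- t)) by (apply exp_mono; lra).
    rewrite exp_Ropp in Hmono.
    pose proof exp_le_3; pose proof (exp_pos 1).
    assert (/ 3 <= / exp 1) by (apply Rinv_le_contravar; lra).
    lra.
  - rewrite <- exp_0; apply exp_increasing; lra.
Qed.

Lemma K_factor (t x u : R) : 0 < t ->
  K t x u = exp (Rpot x) * gauss (sqrt (1 - exp (- t) ^ 2)) (exp (- t) * u - x).
Proof.
  intros Ht.
  assert (HE2 : exp (-2 * t) = exp (- t) ^ 2).
  { simpl; rewrite Rmult_1_r, <- exp_plus; f_equal; ring. }
  assert (Hs : 0 < 1 - exp (- t) ^ 2).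
  { assert (exp (- t) < 1) by (rewrite <- exp_0; apply exp_increasing; lra).
    pose proof (exp_pos (- t)); nra. }
  assert (Hr2 : sqrt (1 - exp (- t) ^ 2) ^ 2 = 1 - exp (- t) ^ 2)
    by (apply pow2_sqrt; lra).
  unfold K, gauss; rewrite HE2, Hr2; unfold Rdiv; ring.
Qed.

Lemma cutoff_complement (eta : R -> R) (y : R) : cutoff eta -> 0 <= y ->
  0 <= 1 - eta y <= 1 /\ (y <= / 2 -> 1 - eta y = 0).
Proof.
  intros [_ [Hone [_ Hrange]]] Hy.
  destruct (Hrange y Hy); split; [lra|].
  intros Hsmall; rewrite (Hone y (conj Hy Hsmall)); ring.
Qed.

Theorem mainTheorem8 (eta : R -> R) (Heta : cutoff eta) :
  exists C : R, forall x u : R, forall t : R, 0 < t <= 1 ->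
    K t x u * (1 - eta ((1 + Rabs x) * Rabs (x - u)))
      <= C * exp (Rpot x) * (1 + Rabs x).
Proof.
  exists 12; intros x u t Ht.
  set (E := exp (- t)); set (r := sqrt (1 - E ^ 2)); set (a := E * u - x).
  set (y := (1 + Rabs x) * Rabs (x - u)).
  pose proof (Rabs_pos x) as Hx; pose proof (exp_pos (Rpot x)) as Hpot.
  assert (Hy : 0 <= y) by (unfold y; pose proof (Rabs_pos (x - u)); nra).
  destruct (cutoff_complement eta y Heta Hy) as [Hcut Hnear].
  destruct (exp_neg_bounds t Ht) as [HE3 HE1]; fold E in HE3, HE1.
  assert (Hs : 0 < 1 - E ^ 2) by nra.
  assert (Hr : 0 < r <= 1).
  { split; [apply sqrt_lt_R0; lra|].
    rewrite <- sqrt_1; apply sqrt_le_1_alt; nra. }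
  assert (Hr2 : r ^ 2 = 1 - E ^ 2) by (apply pow2_sqrt; lra).
  rewrite K_factor by lra; fold E r a.
  pose proof (gauss_nonneg r a (proj1 Hr)) as Hg.
  destruct (Rle_or_lt y (/ 2)) as [Hdiag | Hoff].
  - rewrite (Hnear Hdiag); nra.
  - assert (Hsep : (1 + Rabs x) * (Rabs a + r ^ 2 * Rabs x) > / 6)
      by (rewrite Hr2; apply off_support_separation; [lra | exact Hoff]).
    pose proof (gauss_off_diagonal r a (Rabs x) Hr Hx Hsep) as Hbound.
    assert (gauss r a * (1 - eta y) <= 12 * (1 + Rabs x)) by nra.
    replace (12 * exp (Rpot x) * (1 + Rabs x))
      with (exp (Rpot x) * (12 * (1 + Rabs x))) by ring.
    rewrite Rmult_assoc; apply Rmult_le_compat_l; lra.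
Qed.
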